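(* For any central, essential real hyperplane arrangement $\mathcal{A}$, the graph $G_1$ has diameter exactly $|L_1|$ (the number of hyperplanes). For any choice of base chamber $c_0$ of $\mathcal{A}$, the graph $G_2$ has diameter at least $|L_2|$.
   Context: A central, essential arrangement $\mathcal{A}$ is a finite set of linear hyperplanes in $\mathbb{R}^d$ with common intersection $\{0\}$; $L_i$ is the set of codimension-$i$ subspaces obtained as intersections of hyperplanes of $\mathcal{A}$, so $L_1=\mathcal{A}$. Chambers are connected components of the complement of the union of hyperplanes; $L_1(c,c')$ is the set of hyperplanes separating chambers $c,c'$. $G_1$ is the graph on chambers with $c,c'$ adjacent iff $|L_1(c,c')|=1$. A minimal gallery is a shortest path in $G_1$; one from $c_0$ to $-c_0$ crosses every hyperplane exactly once. For minimal galleries $r,r'$ from $c_0$ to $-c_0$, $L_2(r,r')$ is the set of $X\in L_2$ such that $r,r'$ cross the hyperplanes containing $X$ in different orders. $G_2$ is the graph whose vertices are the minimal galleries from $c_0$ to $-c_0$, with $r,r'$ adjacent iff $|L_2(r,r')|=1$. *)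

From HB Require Import structures.
From mathcomp Require Import all_boot all_order all_algebra.
From mathcomp Require Import all_classical all_reals all_analysis.
Set Implicit Arguments. Unset Strict Implicit. Unset Printing Implicit Defensive.
Import Order.TTheory GRing.Theory Num.Theory numFieldNormedType.Exports.
Local Open Scope classical_set_scope.
Local Open Scope ring_scope.

Section Arrangements.
Variables (R : realType) (d n : nat).
Notation V := 'rV[R]_d.

(* An arrangement of n hyperplanes in R^d is given by normal vectors a i;
   the i-th hyperplane is H a i = {x | <a i, x> = 0}. *)
Variable a : 'I_n -> V.

Definition dotv (u v : V) : R := \sum_(k < d) u 0 k * v 0 k.

Definition hyp (i : 'I_n) : set V := [set x | dotv (a i) x = 0].

Definition central_essential_arrangement : Prop :=
  [/\ forall i, a i != 0,
      forall i j, i != j -> hyp i <> hyp j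
    & \bigcap_(i in [set: 'I_n]) hyp i = [set 0]].

Definition complement : set V := ~` (\bigcup_(i in [set: 'I_n]) hyp i).

Definition chamber (c : set V) : Prop :=
  exists2 x, complement x & c = connected_component complement x.

Definition separates (i : 'I_n) (c c' : set V) : Prop :=
  forall x y, c x -> c' y -> dotv (a i) x * dotv (a i) y < 0.

Definition L1sep (c c' : set V) : {set 'I_n} :=
  [set i | `[< separates i c c' >]].

Definition G1adj (c c' : set V) : Prop :=
  [/\ chamber c, chamber c' & #|L1sep c c'| = 1%N].

(* a path (gallery) in G_1 from c through the chambers s, ending at c';
   its length is size s *)
Fixpoint gallery (c : set V) (s : seq (set V)) (c' : set V) : Prop :=
  match s with
  | [::] => c = c'
  | c1 :: s' => G1adj c c1 /\ gallery c1 s' c'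
  end.

Definition negc (c : set V) : set V := [set x | c (- x)].

(* minimal galleries from c0 to -c0 (shortest paths in G_1);
   a gallery r is represented by the chambers following c0 *)
Definition min_gallery (c0 : set V) (r : seq (set V)) : Prop :=
  gallery c0 r (negc c0) /\
  forall s, gallery c0 s (negc c0) -> (size r <= size s)%N.

Definition crossings (c0 : set V) (r : seq (set V)) : seq 'I_n :=
  flatten [seq enum (L1sep p.1 p.2) | p <- zip (c0 :: r) r].

Definition rowsS (S : {set 'I_n}) : 'M[R]_(n, d) :=
  \matrix_(i < n) (if i \in S then a i else 0).

(* L_2: codimension-2 subspaces that are intersections of hyperplanes
   of the arrangement (the codimension of the intersection of the
   hyperplanes indexed by S is the rank of the matrix of their normals) *)
Definition L2 : set (set V) :=
  [set X | exists S : {set 'I_n},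
     X = \bigcap_(i in [set j | j \in S]) hyp i /\ \rank (rowsS S) = 2%N].

Definition L2diff (c0 : set V) (r r' : seq (set V)) : set (set V) :=
  [set X | L2 X /\
     [seq i <- crossings c0 r | `[< X `<=` hyp i >]] <>
     [seq i <- crossings c0 r' | `[< X `<=` hyp i >]]].

Definition G2adj (c0 : set V) (r r' : seq (set V)) : Prop :=
  [/\ min_gallery c0 r, min_gallery c0 r' & exists X, L2diff c0 r r' = [set X]].

Fixpoint G2path (c0 : set V) (r : seq (set V)) (p : seq (seq (set V)))
    (r' : seq (set V)) : Prop :=
  match p with
  | [::] => r = r'
  | r1 :: p' => G2adj c0 r r1 /\ G2path c0 r1 p' r'
  end.

End Arrangements.

(* Chambers are the sign cells of the arrangement, and two chambers are
   separated exactly by the hyperplanes on which their sign vectors differ.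
   A gallery crosses every separating hyperplane, so it is at least as long
   as the number of them.  Conversely, once the start point x has been moved
   (inside its chamber) off the finitely many hyperplanes spanned by the
   target y and some H_i ∩ H_j, the segment from x to y meets the separating
   hyperplanes at pairwise distinct times; stepping just past the first one
   gives a gallery of exactly that length.  Hence diam G_1 = n, attained by
   antipodal chambers c and -c.
   A minimal gallery r from c0 to -c0 crosses every hyperplane once, and the
   antipodal image of its reversal is a minimal gallery r' crossing them in
   the opposite order.  Every X in L_2 lies on two distinct hyperplanes, which
   r and r' cross in different orders, so L_2(r, r') = L_2.  As L_2(., .)
   obeys a triangle inequality and a G_2-edge contributes one element, every
   G_2-path from r to r' has at least |L_2| edges. *)

From HB Require Import structures.
From mathcomp Require Import all_boot all_order all_algebra.
From mathcomp Require Import all_classical all_reals all_analysis.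
From mathcomp Require Import ring lra.
Set Implicit Arguments. Unset Strict Implicit. Unset Printing Implicit Defensive.
Import Order.TTheory GRing.Theory Num.Theory numFieldNormedType.Exports.
Local Open Scope classical_set_scope.
Local Open Scope ring_scope.

Section Signs.
Variable R : realFieldType.
Implicit Types p q al be t : R.

Lemma exists_pos_lower_bound (s : seq R) :
  exists2 e : R, 0 < e & forall b, b \in s -> 0 < b -> e <= b.
Proof.
elim: s => [|b s [e e0 He]]; first by exists 1.
have [b0|b_le0] := ltrP 0 b.
  exists (Num.min e b) => [|c]; first by rewrite lt_min e0 b0.
  by rewrite inE => /orP[/eqP->|cs] c0; rewrite ge_min ?lexx ?orbT ?He.
by exists e => // c; rewrite inE => /orP[/eqP->|/He//]; lra.
Qed.

Lemma addr_sign_small al be : al != 0 -> `|be| < `|al| ->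
  al + be != 0 /\ (0 < al + be) = (0 < al).
Proof.
move=> al0; rewrite ltr_norml; case: (ltrgtP al 0) al0 => // hal _.
  by rewrite (ltr0_norm hal) => /andP[h1 h2]; split; [apply/eqP|]; lra.
by rewrite (gtr0_norm hal) => /andP[h1 h2]; split; [apply/eqP|]; lra.
Qed.

Lemma mulr_lt0_signs p q : p != 0 -> q != 0 ->
  (p * q < 0) = ((0 < p) != (0 < q)).
Proof.
move=> p0 q0; rewrite neq0_mulr_lt0 //.
by case: (ltrgtP p 0) p0 => // _ _; case: (ltrgtP q 0) q0.
Qed.

Lemma mulr_gt0_signs p q : 0 < p * q -> (0 < p) = (0 < q).
Proof.
case: (ltrgtP p 0) => [p0|p0|->]; last by rewrite mul0r ltxx.
  by rewrite nmulr_rgt0 // => q0; rewrite (lt_gtF q0).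
by rewrite pmulr_rgt0 // => ->.
Qed.

Lemma affine_sign_same al be t : al != 0 -> be != 0 ->
  (0 < al) = (0 < be) -> 0 <= t <= 1 ->
  al + t * (be - al) != 0 /\ (0 < al + t * (be - al)) = (0 < al).
Proof.
move=> al0 be0 same /andP[t0 t1].
case: (ltrgtP al 0) al0 same => // hal _ same.
  have hbe : be < 0 by rewrite lt_neqAle be0 leNgt -same.
  have : al + t * (be - al) < 0 by nra.
  by move=> h; rewrite lt_eqF // lt_gtF.
have hbe : 0 < be by rewrite -same.
have : 0 < al + t * (be - al) by nra.
by move=> h; rewrite gt_eqF.
Qed.

(* The affine function t |-> al + t (be - al) vanishes exactly at the crossing
   time al / (al - be), since it equals (al - be) (al / (al - be) - t). *)
Lemma affine_sign_cross al be t : al * be < 0 ->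
  (0 <= t -> t < al / (al - be) ->
     al + t * (be - al) != 0 /\ (0 < al + t * (be - al)) = (0 < al)) /\
  (al / (al - be) < t -> t <= 1 ->
     al + t * (be - al) != 0 /\ (0 < al + t * (be - al)) = (0 < be)).
Proof.
move=> albe; have ab0 : al - be != 0 by apply/eqP => h; nra.
have -> : al + t * (be - al) = (al - be) * (al / (al - be) - t) by field.
set t0 := al / (al - be).
case: (ltrgtP al 0) albe => [hal|hal|->]; last by rewrite mul0r ltxx.
- rewrite nmulr_rlt0 // => hbe; have hab : al - be < 0 by lra.
  rewrite (nmulr_rgt0 _ hab) hbe; split=> h1 h2.
    have h : 0 < t0 - t by lra.
    by rewrite mulf_neq0 ?(gt_eqF h) // (lt_gtF h).
  have h : t0 - t < 0 by lra.
  by rewrite mulf_neq0 ?(lt_eqF h) // h.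
- rewrite pmulr_rlt0 // => hbe; have hab : 0 < al - be by lra.
  rewrite (pmulr_rgt0 _ hab) (lt_gtF hbe); split=> h1 h2.
    have h : 0 < t0 - t by lra.
    by rewrite mulf_neq0 ?(gt_eqF h) // h.
  have h : t0 - t < 0 by lra.
  by rewrite mulf_neq0 ?(lt_eqF h) // (lt_gtF h).
Qed.

Lemma crossing_time_range al be : al * be < 0 -> 0 < al / (al - be) < 1.
Proof.
case: (ltrgtP al 0) => [hal|hal|->]; last by rewrite mul0r ltxx.
- rewrite nmulr_rlt0 // => hbe; have hab : al - be < 0 by lra.
  by rewrite ltr_ndivlMr // ltr_ndivrMr //; apply/andP; split; lra.
- rewrite pmulr_rlt0 // => hbe; have hab : 0 < al - be by lra.
  by rewrite ltr_pdivlMr // ltr_pdivrMr //; apply/andP; split; lra.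
Qed.

Lemma exists_gap t0 (s : seq R) : t0 < 1 -> (forall t, t \in s -> t0 < t) ->
  exists tau, [/\ t0 < tau, tau <= 1 & forall t, t \in s -> tau < t].
Proof.
move=> t01 st0.
have [e e0 He] := exists_pos_lower_bound (1 - t0 :: [seq t - t0 | t <- s]).
have e1 : e <= 1 - t0 by apply: He; rewrite ?mem_head // subr_gt0.
exists (t0 + e / 2); split => [||t ts]; try lra.
have : e <= t - t0.
  by apply: He; rewrite ?inE ?(map_f (fun t => t - t0) ts) ?orbT ?subr_gt0 ?st0.
lra.
Qed.

End Signs.

Section DotProduct.
Variables (R : realType) (d : nat).
Local Notation V := 'rV[R]_d.
Local Notation dot := (@dotv R d).

Lemma dotvD u x y : dot u (x + y) = dot u x + dot u y.
Proof. by rewrite /dotv -big_split; apply: eq_bigr => k _; rewrite mxE mulrDr. Qed.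

Lemma dotvZ u k x : dot u (k *: x) = k * dot u x.
Proof. by rewrite /dotv mulr_sumr; apply: eq_bigr => j _; rewrite mxE mulrCA. Qed.

Lemma dotvN u x : dot u (- x) = - dot u x.
Proof. by rewrite -scaleN1r dotvZ mulN1r. Qed.

Lemma dotvB u x y : dot u (x - y) = dot u x - dot u y.
Proof. by rewrite dotvD dotvN. Qed.

Lemma dotvC u x : dot u x = dot x u.
Proof. by rewrite /dotv; apply: eq_bigr => k _; rewrite mulrC. Qed.

Lemma dotv0 u : dot u 0 = 0.
Proof. by rewrite /dotv big1 // => k _; rewrite mxE mulr0. Qed.

Lemma dot0v u : dot 0 u = 0.
Proof. by rewrite dotvC dotv0. Qed.

Lemma dotvv_neq0 u : u != 0 -> dot u u != 0.
Proof.
apply: contraNN => /eqP uu0; apply/eqP/matrixP => i j; rewrite ord1 mxE.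
have /psumr_eq0P sq0 : \sum_(k < d) u 0 k ^+ 2 = 0.
  by rewrite -[RHS]uu0 /dotv; apply: eq_bigr => k _; rewrite expr2.
by apply/eqP; rewrite -sqrf_eq0; apply/eqP/sq0 => // k _; exact: sqr_ge0.
Qed.

Lemma continuous_dotv u : continuous (dot u).
Proof.
rewrite /dotv; elim: (index_enum 'I_d) => [|k r IH].
  under [X in continuous X]funext do rewrite big_nil.
  exact: cst_continuous.
under [X in continuous X]funext do rewrite big_cons.
move=> x; apply: (@continuousD R R^o _ _ _ x); last exact: IH.
by apply: continuousM; [exact: cst_continuous | exact: coord_continuous].
Qed.

Lemma continuous_segment (x y : V) : continuous (fun t : R => x + t *: (y - x)).
Proof.
move=> t; have cx : {for t, continuous (fun _ : R => x)} by exact: cst_continuous.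
by apply: (continuousD cx); apply: continuousZr_tmp.
Qed.

(* Both the perturbation and the sign preservation come from choosing t below
   |<l, x>| / (|<l, u>| + 1) for every l with <l, x> != 0. *)
Lemma small_perturbation (L : seq V) x u :
  (forall l, l \in L -> dot l x != 0 \/ dot l u != 0) ->
  exists2 t, 0 < t & forall l, l \in L ->
    dot l (x + t *: u) != 0 /\
    (dot l x != 0 -> (0 < dot l (x + t *: u)) = (0 < dot l x)).
Proof.
move=> HL.
have [e e0 He] := exists_pos_lower_bound
  [seq `|dot l x| / (`|dot l u| + 1) | l <- L].
exists e => // l lL; rewrite dotvD dotvZ.
have keep : dot l x != 0 ->
    dot l x + e * dot l u != 0 /\ (0 < dot l x + e * dot l u) = (0 < dot l x).
  move=> lx0; apply: addr_sign_small => //.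
  have q0 : 0 < `|dot l x| / (`|dot l u| + 1).
    by rewrite divr_gt0 ?normr_gt0 // ltr_wpDl.
  have := He _ (map_f _ lL) q0; rewrite ler_pdivlMr ?ltr_wpDl // => h.
  rewrite normrM (gtr0_norm e0).
  have : e * `|dot l u| < e * (`|dot l u| + 1) by rewrite ltr_pM2l //; lra.
  lra.
have [lx0|lx0] := eqVneq (dot l x) 0; last by have [] := keep lx0.
have [/eqP|lu0] := HL l lL; first by rewrite lx0.
by rewrite lx0 add0r mulf_neq0 ?(gt_eqF e0) //; split => //; rewrite eqxx.
Qed.

Lemma exists_nonorthogonal (L : seq V) : (forall l, l \in L -> l != 0) ->
  exists w, forall l, l \in L -> dot l w != 0.
Proof.
elim: L => [|l L IH] L0; first by exists 0.
have [w Hw] : exists w, forall l', l' \in L -> dot l' w != 0.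
  by apply: IH => l' l'L; apply: L0; rewrite inE l'L orbT.
have [lw0|lw0] := eqVneq (dot l w) 0; last first.
  by exists w => l'; rewrite inE => /orP[/eqP->|/Hw].
have HL l' : l' \in l :: L -> dot l' w != 0 \/ dot l' l != 0.
  rewrite inE => /orP[/eqP->|/Hw]; last by left.
  by right; apply/dotvv_neq0/L0; rewrite inE eqxx.
have [t t0 Ht] := small_perturbation HL.
by exists (w + t *: l) => l' /Ht[].
Qed.

End DotProduct.

Section Chambers.
Variables (R : realType) (d n : nat) (a : 'I_n -> 'rV[R]_d).
Local Notation V := 'rV[R]_d.
Local Notation dot := (@dotv R d).

Definition side (x : V) (i : 'I_n) : bool := 0 < dot (a i) x.

Definition regular (x : V) : Prop := forall i, dot (a i) x != 0.

Definition cell (x : V) : set V :=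
  [set y | regular y /\ forall i, side y i = side x i].

Definition sepset (x y : V) : {set 'I_n} := [set i | side x i != side y i].

Lemma complementP y : complement a y <-> regular y.
Proof.
split => [Hy i|yreg [i _ hi]]; last by move: (yreg i); rewrite hi eqxx.
by apply/eqP => h; apply: Hy; exists i.
Qed.

Lemma regular_opp x : regular x -> regular (- x).
Proof. by move=> xreg i; rewrite dotvN oppr_eq0. Qed.

Lemma side_opp x i : regular x -> side (- x) i = ~~ side x i.
Proof. by move=> xreg; rewrite /side dotvN oppr_gt0; case: ltrgtP (xreg i). Qed.

Lemma cell_refl x : regular x -> cell x x.
Proof. by split. Qed.

Lemma eq_cell x x' : (forall i, side x' i = side x i) -> cell x' = cell x.
Proof. by move=> H; apply/seteqP; split=> y [yreg hy]; split=> // i; rewrite hy H. Qed.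

(* f := <a i, x> <a i, .> is continuous and nonzero on the complement and
   positive at x, hence positive on the whole component of x. *)
Lemma component_sub_cell x : regular x ->
  connected_component (complement a) x `<=` cell x.
Proof.
move=> xreg y Cy.
have compC := @connected_component_sub _ (complement a) x.
have yreg : regular y by apply/complementP/compC.
split=> // i; pose f := dot (dot (a i) x *: a i).
have fE z : f z = dot (a i) x * dot (a i) z by rewrite /f dotvC dotvZ (dotvC z).
have fC : continuous f by exact: continuous_dotv.
have : connected_component (complement a) x `&` [set z | 0 < f z] =
       connected_component (complement a) x.
  apply: component_connected.
  - exists x; split; first by apply: connected_component_refl; apply/complementP.
    by rewrite /= fE lt_def mulf_neq0 //= -expr2 sqr_ge0.
  - exists (f @^-1` [set r | 0 < r]) => //.
    by apply: open_comp; [move=> z _; exact: fC | exact: open_gt].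
  - exists (~` (f @^-1` [set r | r < 0])).
      by apply/open_closedC/open_comp; [move=> z _; exact: fC | exact: open_lt].
    apply/seteqP; split=> z [Cz hz]; split => //=.
      by move=> hz'; rewrite /= in hz hz'; lra.
    have zreg : regular z by apply/complementP/compC.
    have fz0 : f z != 0 by rewrite fE mulf_neq0.
    by move: hz => /negP; rewrite -leNgt le_eqVlt eq_sym (negbTE fz0).
move=> eqC; have : (connected_component (complement a) x `&` [set z | 0 < f z]) y.
  by rewrite eqC.
by case=> _; rewrite /= fE => /mulr_gt0_signs.
Qed.

Lemma cell_sub_component x : regular x ->
  cell x `<=` connected_component (complement a) x.
Proof.
move=> xreg y [yreg hy]; pose g t := x + t *: (y - x).
have segC : g @` `[0, 1] `<=` connected_component (complement a) x.
  apply: connected_component_max.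
  - exists 0; first by rewrite /= in_itv /= lexx ler01.
    by rewrite /g scale0r addr0.
  - move=> z [t]; rewrite /= in_itv /= => t01 <-; apply/complementP => i.
    rewrite /g dotvD dotvZ dotvB.
    by have [] := affine_sign_same (xreg i) (yreg i) (esym (hy i)) t01.
  - apply: connected_continuous_connected; first exact: segment_connected.
    exact/continuous_subspaceT/continuous_segment.
apply: segC; exists 1; first by rewrite /= in_itv /= lexx ler01.
by rewrite /g scale1r addrC subrK.
Qed.

Lemma component_cell x : regular x ->
  connected_component (complement a) x = cell x.
Proof.
by move=> xreg; apply/seteqP; split;
  [exact: component_sub_cell | exact: cell_sub_component].
Qed.

Lemma chamberP c : chamber a c <-> exists2 x, regular x & c = cell x.
Proof.
split; first by move=> [x /complementP xreg ->]; exists x; rewrite ?component_cell.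
by move=> [x xreg ->]; exists x; [apply/complementP | rewrite component_cell].
Qed.

Lemma negc_cell x : regular x -> negc (cell x) = cell (- x).
Proof.
move=> xreg; apply/seteqP; split => y [yreg hy].
  have yreg' : regular y by rewrite -[y]opprK; exact: regular_opp.
  by split => // i; rewrite side_opp // -(hy i) side_opp // negbK.
split; first exact: regular_opp.
by move=> i; rewrite side_opp // hy side_opp // negbK.
Qed.

Lemma L1sep_cell x y : regular x -> regular y ->
  L1sep a (cell x) (cell y) = sepset x y.
Proof.
move=> xreg yreg; apply/setP => i; rewrite !inE; apply/asboolP/idP.
  by move=> /(_ x y (cell_refl xreg) (cell_refl yreg)); rewrite mulr_lt0_signs.
move=> hi x' y' [x'reg hx] [y'reg hy]; rewrite mulr_lt0_signs //.
by move: (hx i) (hy i); rewrite /side => -> ->.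
Qed.

Lemma crossings_cons c c1 s :
  crossings a c (c1 :: s) = enum (L1sep a c c1) ++ crossings a c1 s.
Proof. by []. Qed.

Lemma size_crossings c s c' : gallery a c s c' -> size (crossings a c s) = size s.
Proof.
elim: s c => [//|c1 s IH] c [[_ _ sep1] g].
by rewrite crossings_cons size_cat (IH _ g) -cardE sep1.
Qed.

Lemma sepset_sub_crossings s x y : regular x -> regular y ->
  gallery a (cell x) s (cell y) -> {subset sepset x y <= crossings a (cell x) s}.
Proof.
elim: s x => [|c1 s IH] x xreg yreg /=.
  move=> exy i; have [_ hx] : cell y x by rewrite -exy; exact: cell_refl.
  by rewrite inE hx eqxx.
move=> [[_ /chamberP [z zreg ->] _] g] i; rewrite crossings_cons mem_cat mem_enum.
rewrite L1sep_cell // !inE; have [//|/negbNE/eqP xz] := boolP (side x i != side z i).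
by rewrite xz => zy; rewrite (IH _ zreg yreg g) ?orbT // inE.
Qed.

Lemma sepset_le_gallery s x y : regular x -> regular y ->
  gallery a (cell x) s (cell y) -> (#|sepset x y| <= size s)%N.
Proof.
move=> xreg yreg g; rewrite -(size_crossings g).
apply: leq_trans (card_size (crossings a (cell x) s)).
apply/subset_leq_card/fintype.subsetP => i.
exact: sepset_sub_crossings xreg yreg g i.
Qed.

Lemma L1sep_sym c c' : L1sep a c c' = L1sep a c' c.
Proof.
by apply/setP => i; rewrite !inE; apply/asboolP/asboolP => H x y hx hy; rewrite mulrC H.
Qed.

Lemma G1adj_sym c c' : G1adj a c c' -> G1adj a c' c.
Proof. by case=> cc cc' sep1; split; rewrite // L1sep_sym. Qed.

Lemma gallery_rcons c s c' c'' : gallery a c s c' -> G1adj a c' c'' ->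
  gallery a c (rcons s c'') c''.
Proof.
elim: s c => [|c1 s IH] c /= => [-> adj|[adj g] adj']; first by split.
by split; last exact: IH g adj'.
Qed.

Lemma crossings_rcons c s c' c'' : gallery a c s c' ->
  crossings a c (rcons s c'') = crossings a c s ++ enum (L1sep a c' c'').
Proof.
elim: s c => [|c1 s IH] c /= => [->|[_ /IH]].
  by rewrite crossings_cons /crossings /= cats0.
by rewrite !crossings_cons => ->; rewrite catA.
Qed.

Lemma gallery_rev c s c' : gallery a c s c' ->
  gallery a c' (rev (belast c s)) c /\
  crossings a c' (rev (belast c s)) = rev (crossings a c s).
Proof.
elim: s c => [|c1 s IH] c /= => [->//|[adj /IH[g' cr']]]; rewrite rev_cons.
split; first exact: gallery_rcons g' (G1adj_sym adj).
rewrite (crossings_rcons _ g') cr' crossings_cons rev_cat L1sep_sym.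
by case: adj => _ _; rewrite cardE; case: (enum _) => [|? []].
Qed.

Lemma negcK (c : set V) : negc (negc c) = c.
Proof. by apply/seteqP; split => x; rewrite /negc /= opprK. Qed.

Lemma L1sep_negc c c' : L1sep a (negc c) (negc c') = L1sep a c c'.
Proof.
apply/setP => i; rewrite !inE; apply/asboolP/asboolP => H x y hx hy.
  by have := H (- x) (- y); rewrite /negc /= !opprK !dotvN mulrNN; apply.
by have := H (- x) (- y) hx hy; rewrite !dotvN mulrNN.
Qed.

Lemma chamber_negc c : chamber a c -> chamber a (negc c).
Proof.
move=> /chamberP[x xreg ->]; apply/chamberP; exists (- x); first exact: regular_opp.
exact: negc_cell.
Qed.

Lemma gallery_negc c s c' : gallery a c s c' ->
  gallery a (negc c) (map (@negc R d) s) (negc c') /\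
  crossings a (negc c) (map (@negc R d) s) = crossings a c s.
Proof.
elim: s c => [|c1 s IH] c /= => [->//|[[cc cc1 sep1] /IH[g' cr']]].
rewrite !crossings_cons L1sep_negc cr'; split=> //; split=> //.
by split; rewrite ?L1sep_negc //; exact: chamber_negc.
Qed.

Lemma card_sepset_le x y : (#|sepset x y| <= n)%N.
Proof. by rewrite -[leqRHS]card_ord max_card. Qed.

Lemma sepset_opp x : regular x -> sepset x (- x) = [set: 'I_n]%SET.
Proof. by move=> xreg; apply/setP => i; rewrite !inE side_opp //; case: side. Qed.

Lemma antipodal_gallery_ge x s : regular x ->
  gallery a (cell x) s (negc (cell x)) -> (n <= size s)%N.
Proof.
move=> xreg; rewrite negc_cell // => /(sepset_le_gallery xreg (regular_opp xreg)).
by rewrite sepset_opp // cardsT card_ord.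
Qed.

Lemma antipodal_gallery_crossings x s : regular x ->
  gallery a (cell x) s (negc (cell x)) -> forall i, i \in crossings a (cell x) s.
Proof.
move=> xreg; rewrite negc_cell // => g i.
by apply: (sepset_sub_crossings xreg (regular_opp xreg) g); rewrite sepset_opp ?inE.
Qed.

Lemma exists_regular : (forall i, a i != 0) -> exists x, regular x.
Proof.
move=> a0.
have [x ax] : exists x, forall l, l \in [seq a i | i <- enum 'I_n] -> dot l x != 0.
  by apply: exists_nonorthogonal => _ /mapP[i _ ->].
by exists x => i; apply: ax; rewrite map_f ?mem_enum.
Qed.

Lemma min_gallery_opposite c0 r : min_gallery a c0 r ->
  min_gallery a c0 (map (@negc R d) (rev (belast c0 r))) /\
  crossings a c0 (map (@negc R d) (rev (belast c0 r))) = rev (crossings a c0 r).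
Proof.
move=> [g rmin]; have [g' cr'] := gallery_rev g.
have [g'' cr''] := gallery_negc g'; rewrite negcK in g'' cr''.
rewrite cr'' cr'; split=> //.
by split=> // s /rmin; rewrite size_map size_rev size_belast.
Qed.

Lemma L2_sub_two_hyps X : L2 a X ->
  exists i j, [/\ i != j, X `<=` hyp a i & X `<=` hyp a j].
Proof.
move=> [S [-> rk2]].
suff /card_gt1P[i [j [iS jS ij]]] : (1 < #|S|)%N.
  by exists i, j; split => //; exact: bigcap_inf.
rewrite ltnNge leq_eqVlt ltnS leqn0.
apply/negP => /orP[/cards1P[i eS]|/eqP/cards0_eq eS]; move: rk2.
  have -> : rowsS a S = \col_k ((k == i)%:R : R) *m a i.
    apply/matrixP => k j; rewrite !mxE big_ord1 !mxE eS inE.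
    by case: (eqVneq k i) => [->|]; rewrite ?mul1r ?mul0r ?mxE.
  move=> rk2; have := mxrankM_maxr (\col_k ((k == i)%:R : R)) (a i).
  by rewrite rk2 => /leq_trans/(_ (rank_leq_row (a i))).
have -> : rowsS a S = 0 by apply/matrixP => k j; rewrite !mxE eS inE mxE.
by rewrite mxrank0.
Qed.

Lemma uniq_neq_rev (T : eqType) (s : seq T) i j : uniq s -> i \in s -> j \in s ->
  i != j -> s != rev s.
Proof.
case: s => [//|x [|y t]]; first by rewrite !inE => _ /eqP-> /eqP->; rewrite eqxx.
move=> us _ _ _; apply/eqP => srev.
have := @nth_uniq _ x [:: x, y & t] 0 (size t).+1 isT (ltnSn _) us.
by rewrite {1}srev nth_rev //= eqxx.
Qed.

Lemma L2diff_sub_trans c0 r r1 r' :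
  L2diff a c0 r r' `<=` L2diff a c0 r r1 `|` L2diff a c0 r1 r'.
Proof.
move=> X [L2X neq].
set F := fun r => [seq i <- crossings a c0 r | `[< X `<=` hyp a i >]].
have [e|e] := eqVneq (F r) (F r1); last by left; split=> //; apply/eqP.
by right; split; rewrite // -/(F r1) -e.
Qed.

Lemma G2path_L2diff_cover c0 r p r' : G2path a c0 r p r' ->
  exists f : nat -> set V, L2diff a c0 r r' `<=` f @` `I_(size p).
Proof.
elim: p r => [|r1 p IH] r /= => [->|[[_ _ [X1 e1]] /IH[f hf]]].
  by exists (fun=> set0) => X [].
exists (fun k => if k is k'.+1 then f k' else X1).
move=> X /(@L2diff_sub_trans c0 r r1 r')[|/hf[k kp <-]]; last by exists k.+1.
by rewrite e1 => ->; exists 0%N.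
Qed.

Lemma G2path_size_ge c0 r p r' m : (L2 a #= `I_m)%card ->
  L2 a `<=` L2diff a c0 r r' -> G2path a c0 r p r' -> (m <= size p)%N.
Proof.
move=> L2m L2diffr /G2path_L2diff_cover[f cover]; rewrite -card_le_II.
apply: card_le_trans (card_image_le f `I_(size p)).
apply: card_le_trans (subset_card_le (subset_trans L2diffr cover)).
by move: L2m; rewrite card_eq_sym card_eq_le => /andP[].
Qed.

Section DistinctHyperplanes.
Hypothesis hyp_inj : forall i j, i != j -> hyp a i <> hyp a j.

(* The form vanishing on H_i ∩ H_j and at y; the segment from x to y meets
   H_i and H_j at the same time only if x lies on its kernel. *)
Definition pencil_form (y : V) i j : V := dot (a j) y *: a i - dot (a i) y *: a j.

Lemma dot_pencil_form y i j z :
  dot (pencil_form y i j) z = dot (a j) y * dot (a i) z - dot (a i) y * dot (a j) z.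
Proof. by rewrite dotvC dotvB !dotvZ !(dotvC z). Qed.

Lemma pencil_form_neq0 y i j : regular y -> i != j -> pencil_form y i j != 0.
Proof.
move=> yreg ij; apply/eqP => P0; apply: (hyp_inj ij); apply/seteqP.
split => z; rewrite /hyp /= => hz; have := dot_pencil_form y i j z; rewrite P0 dot0v hz.
  rewrite mulr0 sub0r => /eqP.
  by rewrite eq_sym oppr_eq0 mulf_eq0 (negbTE (yreg i)) => /eqP.
by rewrite mulr0 subr0 => /eqP; rewrite eq_sym mulf_eq0 (negbTE (yreg j)) => /eqP.
Qed.

Lemma regular_perturbation x y : regular x -> regular y -> exists x',
  [/\ regular x', (forall i, side x' i = side x i) &
      forall i j, i != j -> dot (pencil_form y i j) x' != 0].
Proof.
move=> xreg yreg.
pose P := [seq pencil_form y p.1 p.2 | p <- enum [set p : 'I_n * 'I_n | p.1 != p.2]].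
have [w Pw] : exists w, forall l, l \in P -> dot l w != 0.
  apply: exists_nonorthogonal => l /mapP[p]; rewrite mem_enum inE => p12 ->.
  exact: pencil_form_neq0.
pose L := [seq a i | i <- enum 'I_n] ++ P.
have aL i : a i \in L by rewrite mem_cat map_f ?mem_enum.
have Lxw l : l \in L -> dot l x != 0 \/ dot l w != 0.
  by rewrite mem_cat => /orP[/mapP[i _ ->]|/Pw]; [left|right].
have [t t0 Ht] := small_perturbation Lxw.
exists (x + t *: w); split => [i|i|i j ij].
- by have [] := Ht _ (aL i).
- by have [_ sx] := Ht _ (aL i); rewrite /side sx.
- have [] // := Ht (pencil_form y i j); rewrite mem_cat; apply/orP; right.
  by apply/mapP; exists (i, j); rewrite ?mem_enum ?inE.
Qed.

(* Step just past the first time at which the segment from x to y meets a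
   separating hyperplane. *)
Lemma sepset_step x y : regular x -> regular y ->
  (forall i j, i != j -> dot (pencil_form y i j) x != 0) ->
  (0 < #|sepset x y|)%N ->
  exists2 z, regular z & exists2 i0, i0 \in sepset x y &
    sepset x z = [set i0]%SET /\ sepset z y = (sepset x y :\ i0)%SET.
Proof.
move=> xreg yreg xpen /card_gt0P[j0 j0S]; set S := sepset x y in j0S *.
pose al i := dot (a i) x; pose be i := dot (a i) y; pose tt i := al i / (al i - be i).
have albe i : i \in S -> al i * be i < 0.
  by rewrite inE => ?; rewrite mulr_lt0_signs ?xreg ?yreg.
have [i0 i0S tt_min] : exists2 i0, i0 \in S & forall j, j \in S -> tt i0 <= tt j.
  by case: (arg_minP tt j0S) => i; exists i.
have tt_lt j : j \in S -> j != i0 -> tt i0 < tt j.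
  move=> jS ji0; rewrite lt_neqAle tt_min // andbT; apply: contra (xpen _ _ ji0).
  have den k : k \in S -> al k - be k != 0 by move/albe => ?; apply/eqP => ?; nra.
  rewrite eq_sym eqr_div ?den // => /eqP e; rewrite dot_pencil_form -/(al j) -/(al i0).
  by rewrite -/(be j) -/(be i0); apply/eqP; move: e; rewrite !mulrBr; lra.
have /andP[tt0 tt1] := crossing_time_range (albe _ i0S).
have gap t : t \in [seq tt j | j <- enum (S :\ i0)] -> tt i0 < t.
  by case/mapP => j; rewrite mem_enum in_setD1 => /andP[ji0 jS] ->; exact: tt_lt.
have [tau [tau0 tau1 tau_lt]] := exists_gap tt1 gap.
pose z := x + tau *: (y - x).
have zside j : dot (a j) z != 0 /\ side z j = (if j == i0 then side y j else side x j).
  rewrite /side /z dotvD dotvZ dotvB; case: (eqVneq j i0) => [->|ji0].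
    exact: (proj2 (affine_sign_cross tau (albe _ i0S))) tau0 tau1.
  have [jS|jS] := boolP (j \in S).
    apply: (proj1 (affine_sign_cross tau (albe _ jS))); first lra.
    by apply: tau_lt; apply/mapP; exists j; rewrite // mem_enum in_setD1 ji0.
  apply: affine_sign_same; rewrite ?xreg ?yreg //; last by apply/andP; split; lra.
  by move: jS; rewrite inE negbK => /eqP.
exists z; first by move=> j; have [] := zside j.
exists i0 => //; split; apply/setP => j; rewrite !inE; have [_ ->] := zside j.
  by case: (eqVneq j i0) => [->|]; rewrite ?eqxx //; move: i0S; rewrite inE.
by case: (eqVneq j i0) => [->|]; rewrite ?eqxx.
Qed.

Lemma gallery_sepset x y : regular x -> regular y ->
  exists2 s, gallery a (cell x) s (cell y) & size s = #|sepset x y|.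
Proof.
move=> + yreg; move Hk : #|sepset x y| => k; elim: k x Hk => [|k IH] x0 Hk x0reg.
  exists [::] => //=; apply/esym/eq_cell => i.
  have : i \notin sepset x0 y by rewrite (cards0_eq Hk) inE.
  by rewrite inE negbK => /eqP.
have [x [xreg x0x xpen]] := regular_perturbation x0reg yreg.
have sepx : sepset x y = sepset x0 y by apply/setP => i; rewrite !inE x0x.
rewrite -(eq_cell x0x); rewrite -sepx in Hk.
have := sepset_step xreg yreg xpen; rewrite Hk => /(_ isT)[z zreg [i0 i0S [xz zy]]].
have [|s gs ss] := IH z _ zreg.
  by move: Hk; rewrite zy (cardsD1 i0) i0S add1n => -[].
exists (cell z :: s); last by rewrite /= ss.
split=> //; split; last by rewrite L1sep_cell // xz cards1.
  by apply/chamberP; exists x.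
by apply/chamberP; exists z.
Qed.

Lemma gallery_between_chambers c c' : chamber a c -> chamber a c' ->
  exists2 s, gallery a c s c' & (size s <= n)%N.
Proof.
move=> /chamberP[x xreg ->] /chamberP[y yreg ->].
have [s g ss] := gallery_sepset xreg yreg.
by exists s; rewrite // ss card_sepset_le.
Qed.

Lemma exists_antipodal_min_gallery x : regular x ->
  exists r, min_gallery a (cell x) r.
Proof.
move=> xreg; have [r g sr] := gallery_sepset xreg (regular_opp xreg).
exists r; split=> [|s /(antipodal_gallery_ge xreg)]; first by rewrite negc_cell.
by rewrite sr sepset_opp // cardsT card_ord.
Qed.

Lemma min_gallery_crossings_uniq x r : regular x ->
  min_gallery a (cell x) r -> uniq (crossings a (cell x) r).
Proof.
move=> xreg [g rmin]; apply: (leq_size_uniq (enum_uniq 'I_n)).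
  by move=> i _; exact: antipodal_gallery_crossings g i.
have [s gs ss] := gallery_sepset xreg (regular_opp xreg).
rewrite -cardE card_ord (size_crossings g); apply: leq_trans (rmin s _) _.
  by rewrite negc_cell.
by rewrite ss card_sepset_le.
Qed.

Lemma L2_sub_L2diff_opposite x r : regular x -> min_gallery a (cell x) r ->
  L2 a `<=` L2diff a (cell x) r (map (@negc R d) (rev (belast (cell x) r))).
Proof.
move=> xreg rmin X L2X; split=> //; rewrite (min_gallery_opposite rmin).2 filter_rev.
have [i [j [ij Xi Xj]]] := L2_sub_two_hyps L2X.
have allx := antipodal_gallery_crossings xreg rmin.1.
apply/eqP/(uniq_neq_rev (i := i) (j := j)) => //.
- exact/filter_uniq/(min_gallery_crossings_uniq xreg rmin).
- by rewrite mem_filter allx andbT; apply: asboolT.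
- by rewrite mem_filter allx andbT; apply: asboolT.
Qed.

End DistinctHyperplanes.

End Chambers.

Theorem corollary3p13 (R : realType) (d n : nat) (a : 'I_n -> 'rV[R]_d) :
  central_essential_arrangement a ->
  ((forall c c', chamber a c -> chamber a c' ->
      exists2 s, gallery a c s c' & (size s <= n)%N) /\
   (exists c c', [/\ chamber a c, chamber a c' &
      forall s, gallery a c s c' -> (n <= size s)%N])) /\
  (forall c0, chamber a c0 -> forall m : nat, (L2 a #= `I_m)%card ->
     exists r r', [/\ min_gallery a c0 r, min_gallery a c0 r' &
       forall p, G2path a c0 r p r' -> (m <= size p)%N]).
Proof.
move=> [a0 hyp_inj _]; split; [split|].
- exact: gallery_between_chambers.
- have [x xreg] := exists_regular a0.
  exists (cell a x), (negc (cell a x)); split.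
  + by apply/chamberP; exists x.
  + by apply/chamber_negc/chamberP; exists x.
  + by move=> s; exact: antipodal_gallery_ge.
- move=> c0 /chamberP[x xreg ->] m L2m.
  have [r rmin] := exists_antipodal_min_gallery hyp_inj xreg.
  exists r, (map (@negc R d) (rev (belast (cell a x) r))); split => //.
    exact: (min_gallery_opposite rmin).1.
  by move=> p; apply: G2path_size_ge L2m (L2_sub_L2diff_opposite hyp_inj xreg rmin).
Qed.
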